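(* Let $(\pi_k)_{k=0}^K$ be deterministic policies on an MDP as in the context. Define $q^{\pi'_0} := q^{\pi_0}$, $v^{\pi'_k} := \pi_k q^{\pi'_k}$, and $q^{\pi'_k} := r + \gamma P v^{\pi'_{k-1}}$ for $k\in\{1,\dots,K\}$. Define $\sigma_0^2 := P(v^{\pi_0})^2 - (Pv^{\pi_0})^2$ and, for $k\in\{1,\dots,K\}$, $\sigma_k^2 := P(v^{\pi'_{k-1}})^2 - (Pv^{\pi'_{k-1}})^2$ (squares componentwise), with $\sigma_k := \sqrt{\sigma_k^2}$. Then for every $k\in\{1,\dots,K\}$, $$\sum_{j=0}^{k-1}\gamma^{j+1}P_{k-j}^{k-1}\sigma_{k-j}\leq\sqrt{2H^3}\,\mathbf{1}.$$
   Context: MDP: finite state set $\mathcal{X}$, finite action set $\mathcal{A}$, discount $\gamma\in[0,1)$, reward $r\in[-1,1]^{\mathcal{X}\times\mathcal{A}}$, transition kernel $P(y|x,a)$, $H=1/(1-\gamma)$. $P$ is the matrix in $\mathbb{R}^{(\mathcal{X}\times\mathcal{A})\times\mathcal{X}}$ with $(Pv)(x,a)=\sum_yP(y|x,a)v(y)$; a policy $\pi$ is the matrix in $\mathbb{R}^{\mathcal{X}\times(\mathcal{X}\times\mathcal{A})}$ with $(\pi q)(x) = \sum_a\pi(a|x)q(x,a)$; $P^\pi := P\pi$; $q^\pi$ is the unique fixed point of $q\mapsto r+\gamma P^\pi q$ and $v^\pi=\pi q^\pi$. For $i\ge j$, $P_j^i := P^{\pi_i}P^{\pi_{i-1}}\cdots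 P^{\pi_j}$, and $P_j^i:=I$ if $i<j$. $\mathbf 1$ is the all-ones vector; inequality is componentwise. *)

From HB Require Import structures.
From mathcomp Require Import all_boot all_order all_algebra.
From mathcomp Require Import reals.
Set Implicit Arguments. Unset Strict Implicit. Unset Printing Implicit Defensive.
Import Order.TTheory GRing.Theory Num.Theory.
Local Open Scope ring_scope.

Section MDP.
Variables (R : realType) (X A : finType).

(* q-functions are maps X*A -> R, value functions maps X -> R.
   The transition kernel P(y|x,a) is  P : X * A -> X -> R. *)

Definition Pv (P : X * A -> X -> R) (v : X -> R) : X * A -> R :=
  fun xa => \sum_(y : X) P xa y * v y.

Definition det_policy (d : X -> A) : X -> A -> R :=
  fun x a => (a == d x)%:R.

Definition pol_apply (pi : X -> A -> R) (q : X * A -> R) : X -> R :=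
  fun x => \sum_(a : A) pi x a * q (x, a).

Definition Ppi (P : X * A -> X -> R) (pi : X -> A -> R) (q : X * A -> R)
  : X * A -> R := Pv P (pol_apply pi q).

Fixpoint chain (P : X * A -> X -> R) (pis : nat -> X -> A) (j n : nat)
  (q : X * A -> R) : X * A -> R :=
  match n with
  | 0 => q
  | n'.+1 => Ppi P (det_policy (pis (j + n')%N)) (chain P pis j n' q)
  end.

(* P_j^i q = P^{pi_i} P^{pi_{i-1}} ... P^{pi_j} q, and = q if i < j *)
Definition Pji (P : X * A -> X -> R) (pis : nat -> X -> A) (j i : nat)
  (q : X * A -> R) : X * A -> R := chain P pis j (i.+1 - j) q.

Fixpoint qprime (P : X * A -> X -> R) (r : X * A -> R) (gamma : R)
  (pis : nat -> X -> A) (q0 : X * A -> R) (k : nat) : X * A -> R :=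
  match k with
  | 0 => q0
  | k'.+1 => fun xa => r xa + gamma *
       Pv P (pol_apply (det_policy (pis k')) (qprime P r gamma pis q0 k')) xa
  end.

Definition vprime P r gamma pis q0 k : X -> R :=
  pol_apply (det_policy (pis k)) (qprime P r gamma pis q0 k).

(* sigma_k^2 = P (v^{pi'_{k-1}})^2 - (P v^{pi'_{k-1}})^2 for k >= 1;
   sigma_0^2 = P (v^{pi_0})^2 - (P v^{pi_0})^2 with v^{pi_0} = pi_0 q^{pi_0}
   (which equals v^{pi'_0}); so the same formula with index k.-1 covers both. *)
Definition sigma2 P r gamma pis q0 (k : nat) : X * A -> R :=
  let v := vprime P r gamma pis q0 k.-1 in
  fun xa => Pv P (fun y => v y ^+ 2) xa - (Pv P v xa) ^+ 2.

Definition sigma P r gamma pis q0 (k : nat) : X * A -> R :=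
  fun xa => Num.sqrt (sigma2 P r gamma pis q0 k xa).

End MDP.
Arguments det_policy {R X A} d x a.
Arguments chain {R X A} P pis j n q.
Arguments Pji {R X A} P pis j i q.
Arguments sigma {R X A} P r gamma pis q0 k xa.

(* Write q_m for q^{pi'_m} and H = 1/(1 - gamma). Since |r| <= 1 and the
   kernels are stochastic, |q_m| <= H for every m; and since
   q_{m+1} = r + gamma P v^{pi'_m}, the variances satisfy
     gamma^2 sigma_{m+1}^2 <= gamma^2 P^{pi_m} q_m^2 - q_{m+1}^2 + 2H.
   Pushed through the stochastic operators P_{k-j}^{k-1}, these inequalities
   make sum_j gamma^(j+2) P_{k-j}^{k-1} sigma_{k-j}^2 telescope, so it is at
   most 2H^2. Jensen's inequality P sigma <= sqrt (P sigma^2) and the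
   Cauchy-Schwarz inequality with the weights gamma^j, of total mass at most H,
   then bound the square of the left-hand side by H * 2H^2 = 2H^3. *)

From HB Require Import structures.
From mathcomp Require Import all_boot all_order all_algebra.
From mathcomp Require Import reals ring lra.
Import Order.TTheory GRing.Theory Num.Theory.
Set Implicit Arguments.
Unset Strict Implicit.
Local Open Scope ring_scope.

Lemma weighted_CauchySchwarz (R : realFieldType) (I : finType) (w x : I -> R) :
  (forall i, 0 <= w i) ->
  (\sum_i w i * x i) ^+ 2 <= (\sum_i w i) * \sum_i w i * x i ^+ 2.
Proof.
move=> w_ge0; set W := \sum_i w i; set M := \sum_i w i * x i.
set S := \sum_i w i * x i ^+ 2.
have [W0 | W_neq0] := eqVneq W 0.
  have w0 := psumr_eq0P (fun i _ => w_ge0 i) W0.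
  by rewrite /M big1 ?expr0n ?W0 ?mul0r // => i _; rewrite w0 ?mul0r.
have W_ge0 : 0 <= W by apply: sumr_ge0.
have dev : \sum_i w i * (W * x i - M) ^+ 2 = W * (W * S - M ^+ 2).
  transitivity (\sum_i (W ^+ 2 * (w i * x i ^+ 2) - (2 * W * M) * (w i * x i)
                        + M ^+ 2 * w i)).
    by apply: eq_bigr => i _; ring.
  by rewrite big_split sumrB /= -!mulr_sumr -/W -/M -/S; ring.
have : 0 <= W * (W * S - M ^+ 2).
  by rewrite -dev; apply: sumr_ge0 => i _; rewrite mulr_ge0 ?sqr_ge0.
by rewrite pmulr_rge0 ?lt0r ?W_neq0 // subr_ge0.
Qed.

Section Averages.
Variables (R : realFieldType) (I : finType) (w : I -> R).
Hypotheses (w_ge0 : forall i, 0 <= w i) (w_sum1 : \sum_i w i = 1).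

Lemma norm_avg_le (x : I -> R) (B : R) :
  (forall i, `|x i| <= B) -> `|\sum_i w i * x i| <= B.
Proof.
move=> xB; apply: le_trans (ler_norm_sum _ _ _) _.
apply: le_trans (_ : \sum_i w i * B <= B); last by rewrite -mulr_suml w_sum1 mul1r.
by apply: ler_sum => i _; rewrite normrM ger0_norm ?ler_wpM2l.
Qed.

Lemma sqr_avg_le (x : I -> R) : (\sum_i w i * x i) ^+ 2 <= \sum_i w i * x i ^+ 2.
Proof. by have := weighted_CauchySchwarz x w_ge0; rewrite w_sum1 mul1r. Qed.

Lemma avg_affine_le (a c : R) (f g h : I -> R) :
  (forall i, a * f i <= a * g i - h i + c) ->
  a * (\sum_i w i * f i) <= a * (\sum_i w i * g i) - (\sum_i w i * h i) + c.
Proof.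
move=> fg.
have -> : a * (\sum_i w i * g i) - (\sum_i w i * h i) + c
          = \sum_i w i * (a * g i - h i + c).
  transitivity (\sum_i (a * (w i * g i) - w i * h i + c * w i)).
    by rewrite big_split sumrB /= -!mulr_sumr w_sum1 mulr1.
  by apply: eq_bigr => i _; ring.
by rewrite mulr_sumr; apply: ler_sum => i _; rewrite mulrCA ler_wpM2l.
Qed.

End Averages.

Section DiscountedSums.
Variables (R : rcfType) (g : R).
Hypotheses (g_ge0 : 0 <= g) (g_lt1 : g < 1).
Local Notation H := (1 - g)^-1.

Lemma horizon_gt0 : 0 < H.
Proof. by rewrite invr_gt0 subr_gt0. Qed.

Lemma horizonE : 1 + g * H = H.
Proof. by field; rewrite subr_eq0 eq_sym lt_eqF. Qed.

Lemma geometric_sum n : \sum_(j < n) g ^+ j = (1 - g ^+ n) * H.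
Proof.
have g1 : 1 - g != 0 by rewrite subr_eq0 eq_sym lt_eqF.
apply: (mulIf g1); rewrite -mulrA mulVf // mulr1.
by rewrite -[RHS]opprB subrX1 -mulNr opprB mulrC.
Qed.

Lemma discounted_telescope n (d : nat -> R) :
  \sum_(j < n) g ^+ j * (g * d j.+1 - d j) = g ^+ n * d n - d 0%N.
Proof.
have := telescope_sumr (fun j => g ^+ j * d j) (leq0n n).
rewrite big_mkord expr0 mul1r => <-.
by apply: eq_bigr => j _; rewrite exprS; ring.
Qed.

Lemma discounted_variance_sum_le n (c d : nat -> R) :
  (forall j, 0 <= d j) -> d n <= H ^+ 2 ->
  (forall j, (j < n)%N -> g ^+ 2 * c j <= g ^+ 2 * d j.+1 - d j + 2 * H) ->
  \sum_(j < n) g ^+ j * (g ^+ 2 * c j) <= 2 * H ^+ 2.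
Proof.
move=> d_ge0 dn step.
have gn_ge0 : 0 <= g ^+ n by rewrite exprn_ge0.
have gn_le1 : g ^+ n <= 1 by rewrite exprn_ile1 // ltW.
apply: le_trans (_ : \sum_(j < n) g ^+ j * ((g * d j.+1 - d j) + 2 * H) <= _).
  apply: ler_sum => j _; apply: ler_wpM2l; first by rewrite exprn_ge0.
  (* Trading [g ^+ 2] for [g] here makes the sum telescope. *)
  have : g ^+ 2 * d j.+1 <= g * d j.+1.
    by rewrite expr2 -mulrA ler_piMl ?mulr_ge0 // ltW.
  have := step j (ltn_ord j); lra.
under eq_bigr do rewrite mulrDr.
rewrite big_split /= -mulr_suml discounted_telescope geometric_sum.
have := d_ge0 0%N; nra.
Qed.

Lemma discounted_sqrt_sum_le n (c t : nat -> R) :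
  (forall j, 0 <= c j) -> \sum_(j < n) g ^+ j * (g ^+ 2 * c j) <= 2 * H ^+ 2 ->
  (forall j, (j < n)%N -> t j <= Num.sqrt (c j)) ->
  \sum_(j < n) g ^+ j.+1 * t j <= Num.sqrt (2 * H ^+ 3).
Proof.
move=> c_ge0 sum_le t_le.
have H_gt0 := horizon_gt0.
set Z := \sum_(j < n) g ^+ j * (g * Num.sqrt (c j)).
apply: (le_trans (_ : _ <= Z)).
  apply: ler_sum => j _; rewrite mulrA -exprSr.
  by apply: ler_wpM2l; [rewrite exprn_ge0 | apply: t_le].
apply: le_trans (ler_norm Z) _.
rewrite -sqrtr_sqr ler_sqrt; last by rewrite mulr_ge0 ?exprn_ge0 // ltW.
apply: le_trans (weighted_CauchySchwarz _ (fun j : 'I_n => exprn_ge0 j g_ge0)) _.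
have -> : \sum_(j < n) g ^+ j * (g * Num.sqrt (c j)) ^+ 2
          = \sum_(j < n) g ^+ j * (g ^+ 2 * c j).
  by apply: eq_bigr => j _; rewrite exprMn sqr_sqrtr.
rewrite exprSr mulrA [2 * _]mulrC -mulrA.
apply: ler_pM => //; first by apply: sumr_ge0 => j _; rewrite exprn_ge0.
  by apply: sumr_ge0 => j _; rewrite !mulr_ge0 ?exprn_ge0 ?sqr_ge0.
by rewrite geometric_sum ger_pMl // lerBlDr lerDl exprn_ge0.
Qed.

End DiscountedSums.

Section MarkovChains.
Variables (R : realType) (X A : finType) (P : X * A -> X -> R) (pis : nat -> X -> A).
Hypotheses (P_ge0 : forall xa y, 0 <= P xa y) (P_sum1 : forall xa, \sum_y P xa y = 1).

Lemma pol_apply_det (d : X -> A) (q : X * A -> R) (y : X) :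
  pol_apply (det_policy d) q y = q (y, d y).
Proof.
rewrite /pol_apply (bigD1 (d y)) //= /det_policy eqxx mul1r big1 ?addr0 //.
by move=> a /negbTE ->; rewrite mul0r.
Qed.

Lemma Ppi_det (d : X -> A) (f : X * A -> R) (z : X * A) :
  Ppi P (det_policy d) f z = \sum_y P z y * f (y, d y).
Proof. by apply: eq_bigr => y _; rewrite pol_apply_det. Qed.

Lemma chain_recl j n f :
  chain P pis j n.+1 f = chain P pis j.+1 n (Ppi P (det_policy (pis j)) f).
Proof. by elim: n => [|n /= ->]; rewrite /= ?addn0 ?addnS. Qed.

Lemma chain_markov j n : exists w : X * A -> X * A -> R,
  [/\ forall z u, 0 <= w z u, forall z, \sum_u w z u = 1 &
      forall f z, chain P pis j n f z = \sum_u w z u * f u].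
Proof.
elim: n => [|n [w [w_ge0 w_sum1 wE]]].
  exists (fun z u => (u == z)%:R); split => [z u|z|f z]; first by rewrite ler0n.
    by rewrite (bigD1 z) //= eqxx big1 ?addr0 // => u /negbTE ->.
  rewrite /= (bigD1 z) //= eqxx mul1r big1 ?addr0 // => u /negbTE ->.
  by rewrite mul0r.
exists (fun z u => \sum_y P z y * w (y, pis (j + n)%N y) u).
split => [z u|z|f z].
- by apply: sumr_ge0 => y _; rewrite mulr_ge0.
- rewrite exchange_big /= -(P_sum1 z); apply: eq_bigr => y _.
  by rewrite -mulr_sumr w_sum1 mulr1.
rewrite /= Ppi_det.
transitivity (\sum_y \sum_u P z y * (w (y, pis (j + n)%N y) u * f u)).
  by apply: eq_bigr => y _; rewrite wE mulr_sumr.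
rewrite exchange_big /=; apply: eq_bigr => u _; rewrite mulr_suml.
by apply: eq_bigr => y _; rewrite mulrA.
Qed.

Lemma chain_ge0 j n f z : (forall u, 0 <= f u) -> 0 <= chain P pis j n f z.
Proof.
move=> f_ge0; have [w [w_ge0 _ ->]] := chain_markov j n.
by apply: sumr_ge0 => u _; rewrite mulr_ge0.
Qed.

Lemma chain_norm_le j n f z B :
  (forall u, `|f u| <= B) -> `|chain P pis j n f z| <= B.
Proof. by have [w [w_ge0 w_sum1 ->]] := chain_markov j n; apply: norm_avg_le. Qed.

Lemma chain_sqrt_le j n (f : X * A -> R) z : (forall u, 0 <= f u) ->
  chain P pis j n (fun u => Num.sqrt (f u)) z <= Num.sqrt (chain P pis j n f z).
Proof.
move=> f_ge0; have [w [w_ge0 w_sum1 wE]] := chain_markov j n; rewrite !wE.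
apply: le_trans (ler_norm _) _.
rewrite -sqrtr_sqr ler_sqrt; last by apply: sumr_ge0 => u _; rewrite mulr_ge0.
apply: le_trans (sqr_avg_le (w_ge0 z) (w_sum1 z) _) _.
by apply: ler_sum => u _; rewrite sqr_sqrtr.
Qed.

Lemma chain_affine_le j n z (a c : R) (f g h : X * A -> R) :
  (forall u, a * f u <= a * g u - h u + c) ->
  a * chain P pis j n f z <= a * chain P pis j n g z - chain P pis j n h z + c.
Proof.
have [w [w_ge0 w_sum1 wE]] := chain_markov j n; rewrite !wE.
exact: avg_affine_le.
Qed.

End MarkovChains.

Section BellmanVariance.
Variables (R : realType) (X A : finType) (P : X * A -> X -> R).
Variables (pis : nat -> X -> A) (gamma : R) (r q0 : X * A -> R).
Hypotheses (P_ge0 : forall xa y, 0 <= P xa y) (P_sum1 : forall xa, \sum_y P xa y = 1).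
Hypotheses (gamma_ge0 : 0 <= gamma) (gamma_lt1 : gamma < 1).
Hypothesis r_le1 : forall xa, `|r xa| <= 1.
Hypothesis q0_fix : forall xa, q0 xa = r xa + gamma * Ppi P (det_policy (pis 0%N)) q0 xa.

Local Notation H := (1 - gamma)^-1.
Local Notation q := (qprime P r gamma pis q0).

Lemma bellman_norm_le z (v : X -> R) (B : R) :
  (forall y, `|v y| <= B) -> `|r z + gamma * Pv P v z| <= 1 + gamma * B.
Proof.
move=> vB; apply: le_trans (ler_normD _ _) _.
by rewrite normrM ger0_norm // lerD // ler_wpM2l // norm_avg_le.
Qed.

Lemma qprime0_norm_le z : `|q0 z| <= H.
Proof.
pose M := \big[Order.max/0]_u `|q0 u|.
have q0_leM u : `|q0 u| <= M by apply: le_bigmax.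
have M_ge0 : 0 <= M := le_trans (normr_ge0 _) (q0_leM z).
have : M <= 1 + gamma * M.
  apply: bigmax_le => [|u _]; first by rewrite addr_ge0 ?mulr_ge0.
  by rewrite q0_fix; apply: bellman_norm_le => y; rewrite pol_apply_det.
have := horizonE gamma_lt1; have := horizon_gt0 gamma_lt1.
have := q0_leM z; nra.
Qed.

Lemma qprime_norm_le m z : `|q m z| <= H.
Proof.
elim: m z => [|m IH] z; first exact: qprime0_norm_le.
by rewrite -horizonE //; apply: bellman_norm_le => y; rewrite pol_apply_det.
Qed.

Lemma sigma2_ge0 m z : 0 <= sigma2 P r gamma pis q0 m z.
Proof. by rewrite /sigma2 subr_ge0 sqr_avg_le. Qed.

Lemma sigma2S_le m z :
  gamma ^+ 2 * sigma2 P r gamma pis q0 m.+1 z <=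
  gamma ^+ 2 * Ppi P (det_policy (pis m)) (fun u => q m u ^+ 2) z
  - q m.+1 z ^+ 2 + 2 * H.
Proof.
pose v := vprime P r gamma pis q0 m.
have qSE : q m.+1 z = r z + gamma * Pv P v z by [].
have sqrE : Pv P (fun y => v y ^+ 2) z = Ppi P (det_policy (pis m)) (fun u => q m u ^+ 2) z.
  by rewrite Ppi_det; apply: eq_bigr => y _; rewrite /v /vprime pol_apply_det.
rewrite /sigma2 /= -/v sqrE.
have := qprime_norm_le m.+1 z; rewrite qSE ler_norml => /andP[qS_lb qS_ub].
have := r_le1 z; rewrite ler_norml => /andP[r_lb r_ub].
(* [(gamma * Pv P v z) ^+ 2 = (q m.+1 z - r z) ^+ 2 >= q m.+1 z ^+ 2 - 2 * H]
   since [|r z| <= 1] and [|q m.+1 z| <= H]. *)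
nra.
Qed.

Lemma chain_variance_step m n z :
  gamma ^+ 2 * chain P pis m.+1 n (sigma2 P r gamma pis q0 m.+1) z <=
  gamma ^+ 2 * chain P pis m n.+1 (fun u => q m u ^+ 2) z
  - chain P pis m.+1 n (fun u => q m.+1 u ^+ 2) z + 2 * H.
Proof. by rewrite chain_recl; apply: chain_affine_le => // u; apply: sigma2S_le. Qed.

End BellmanVariance.

Theorem lemma22 (R : realType) (X A : finType)
  (gamma : R) (r : X * A -> R) (P : X * A -> X -> R)
  (pis : nat -> X -> A) (K : nat) (q0 : X * A -> R) :
  0 <= gamma -> gamma < 1 ->
  (forall xa, `|r xa| <= 1) ->
  (forall xa y, 0 <= P xa y) ->
  (forall xa, \sum_(y : X) P xa y = 1) ->
  (* q0 = q^{pi_0}, the (unique) fixed point of q |-> r + gamma P^{pi_0} q *)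
  (forall xa, q0 xa = r xa + gamma * Ppi P (det_policy (pis 0%N)) q0 xa) ->
  forall k : nat, (1 <= k <= K)%N ->
  forall xa : X * A,
    \sum_(j < k) gamma ^+ j.+1 *
        Pji P pis (k - j)%N k.-1 (sigma P r gamma pis q0 (k - j)%N) xa
    <= Num.sqrt (2 * (1 / (1 - gamma)) ^+ 3).
Proof.
move=> gamma_ge0 gamma_lt1 r_le1 P_ge0 P_sum1 q0_fix k /andP[k_gt0 _] xa.
pose q := qprime P r gamma pis q0.
pose c j := chain P pis (k - j) j (sigma2 P r gamma pis q0 (k - j)) xa.
pose d j := chain P pis (k - j) j (fun u => q (k - j)%N u ^+ 2) xa.
pose t j := chain P pis (k - j) j (sigma P r gamma pis q0 (k - j)) xa.
have PjiE (j : 'I_k) : Pji P pis (k - j) k.-1 = chain P pis (k - j) j.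
  by rewrite /Pji prednK // subKn // ltnW.
under eq_bigr => j _ do rewrite PjiE -/(t j).
rewrite div1r; apply: (discounted_sqrt_sum_le gamma_ge0 gamma_lt1 (c := c)).
- by move=> j; apply: chain_ge0 => // u; apply: sigma2_ge0.
- apply: (discounted_variance_sum_le gamma_ge0 gamma_lt1 (d := d)).
  + by move=> j; apply: chain_ge0 => // u; apply: sqr_ge0.
  + rewrite /d subnn; apply: le_trans (ler_norm _) _.
    apply: chain_norm_le => // u.
    by rewrite normrX lerXn2r ?nnegrE ?qprime_norm_le // ltW ?horizon_gt0.
  + move=> j j_lt_k; rewrite /c /d -(subnSK j_lt_k).
    exact: chain_variance_step.
- by move=> j _; apply: chain_sqrt_le => // u; apply: sigma2_ge0.
Qed.
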